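(* Let $q\equiv 1\pmod 4$ be a prime power and let $n\ge 2$, $k\ge 0$ be integers. If $SP_q$ has property $P(n-1,k)$, then $Tr(SP_q)$ has property $P(n,k)$.
   Context: A signified graph is a simple graph with each edge labelled positive or negative. A signed vector of size $k$ is an element $\alpha=(\alpha_1,\dots,\alpha_k)\in\{+1,-1\}^k$. Given a sequence $X=(v_1,\dots,v_k)$ of $k$ distinct pairwise adjacent vertices, a vertex $u$ is an $\alpha$-successor of $X$ if for each $i$, $uv_i$ is an edge of sign $\alpha_i$; $S^\alpha(X)$ is the set of $\alpha$-successors. A signified graph has property $P(k,l)$ if $|S^\alpha(X)|\ge l$ for every sequence $X$ of $k$ distinct pairwise adjacent vertices and every signed vector $\alpha$ of size $k$. For $x\in\mathbb{F}_q^*$ let $\mathrm{sq}(x)=+1$ if $x$ is a square and $-1$ otherwise. $SP_q$ is the complete graph on $\mathbb{F}_q$ where $xy$ is negative iff $\mathrm{sq}(y-x)=-1$. $Tr(SP_q)$ has vertex set $\{u_i : u\in\mathbb{F}_q\cup\{\infty\},\ i\in\{0,1\}\}$; for $u\ne v$ in $\mathbb{F}_q$, $u_iv_j$ is an edge of sign $\mathrm{sq}(u-v)(-1)^{i+j}$; for $v\in\mathbb{F}_q$, $\infty_iv_j$ is an edge of sign $(-1)^{i+j}$; no other edges. *)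

From HB Require Import structures.
From mathcomp Require Import all_boot all_order all_algebra all_field.
Set Implicit Arguments. Unset Strict Implicit. Unset Printing Implicit Defensive.
Import GRing.Theory.
Local Open Scope ring_scope.

(* A signified graph on a finite vertex type T is encoded by
   sg : T -> T -> option bool :
     sg x y = None        : x and y are not adjacent
     sg x y = Some true   : xy is a positive edge
     sg x y = Some false  : xy is a negative edge.
   Signs +1 / -1 are encoded as true / false. *)
Definition signified_graph (T : finType) (sg : T -> T -> option bool) : Prop :=
  (forall x, sg x x = None) /\ (forall x y, sg x y = sg y x).

Definition successor (T : finType) (sg : T -> T -> option bool) (k : nat)
    (X : k.-tuple T) (alpha : k.-tuple bool) (u : T) : bool :=
  [forall i : 'I_k, sg u (tnth X i) == Some (tnth alpha i)].

Definition successors (T : finType) (sg : T -> T -> option bool) (k : nat)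
    (X : k.-tuple T) (alpha : k.-tuple bool) : {set T} :=
  [set u | successor sg X alpha u].

Definition clique_seq (T : finType) (sg : T -> T -> option bool) (k : nat)
    (X : k.-tuple T) : Prop :=
  uniq X /\ (forall i j : 'I_k, i != j -> sg (tnth X i) (tnth X j) != None).

Definition propP (T : finType) (sg : T -> T -> option bool) (k l : nat) : Prop :=
  forall (X : k.-tuple T) (alpha : k.-tuple bool),
    clique_seq sg X -> (l <= #|successors sg X alpha|)%N.

Definition sq (F : finFieldType) (x : F) : bool := [exists y : F, y * y == x].

Definition SP (F : finFieldType) (x y : F) : option bool :=
  if x == y then None else Some (sq (y - x)).

(* Tr(SP_q): vertices u_i with u in F ∪ {∞} (None = ∞) and i in {0,1}
   (encoded by bool, false = 0, true = 1).  (-1)^(i+j) = +1 iff i == j. *)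
Definition TrSP (F : finFieldType) (a b : option F * bool) : option bool :=
  match a, b with
  | (Some u, i), (Some v, j) =>
      if u == v then None else Some (sq (u - v) == (i == j))
  | (None, i), (Some _, j) => Some (i == j)
  | (Some _, i), (None, j) => Some (i == j)
  | (None, _), (None, _) => None
  end.

From HB Require Import structures.
From mathcomp Require Import all_boot all_order all_algebra all_field.
From mathcomp Require Import cyclic zify ring.
Set Implicit Arguments. Unset Strict Implicit. Unset Printing Implicit Defensive.
Import GRing.Theory.
Local Open Scope ring_scope.

(* Let F be a finite field with q = #|F| = 1 (mod 4), so that -1 is a square
   in F and the quadratic character sq is symmetric: sq (x - y) = sq (y - x).

   For a in F, the "switching" map
       a_i |-> oo_i,   oo_i |-> 0_i,   x_i |-> (1/(x - a))_j
   where j = i if x - a is a square and j = 1 - i otherwise, is an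
   automorphism of the signified graph Tr(SP_q) (it is a bijection that
   preserves every edge sign).  Automorphisms preserve cliques and the number
   of alpha-successors, so for a clique X = (v_1, ..., v_n) we may assume
   v_1 = oo_i.  The other vertices are then x_t of pairwise distinct field
   elements x_t, which form a clique of size n - 1 in SP_q; every successor w
   of it for a suitably adjusted sign vector yields the successor w_j of X in
   the layer j determined by the sign wanted towards oo_i. *)

Section QuadraticCharacter.
Variable F : finFieldType.
Local Notation N := #|F|.-1.

Lemma unit_expf_order (x : F) : x != 0 -> x ^+ N = 1.
Proof.
move=> x0; have := expf_card x.
rewrite -(prednK (ltnW (finNzRing_gt1 F))) exprS => xNx.
by apply: (mulIf x0); rewrite mul1r mulrC.
Qed.

Lemma exists_generator : exists g : F, N.-primitive_root g.
Proof.
have gt1 := finNzRing_gt1 F.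
have : has N.-primitive_root (enum (predC1 (0 : F))).
  apply: has_prim_root; first by rewrite -ltnS prednK // ltnW.
  - by apply/allP => x; rewrite mem_enum unity_rootE => /unit_expf_order ->.
  - exact: enum_uniq.
  - by rewrite -cardE cardC1.
by case/hasP=> g _ hg; exists g.
Qed.

Section Generator.
Variable g : F.
Hypothesis gen_g : N.-primitive_root g.
Hypothesis even_order : (2 %| N)%N.

Lemma generator_exp (x : F) : x != 0 -> exists a, x = g ^+ a.
Proof. by move=> /unit_expf_order /(prim_rootP gen_g) [i ->]; exists i. Qed.

Lemma sq_generator_exp a : sq (g ^+ a) = ~~ odd a.
Proof.
apply/existsP/idP => [[y /eqP yy] | a_even].
- have y0 : y != 0.
    apply: contra_eq_neq yy => ->; rewrite mul0r eq_sym expf_neq0 //.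
    by rewrite (prim_root_eq0 gen_g) -lt0n (prim_order_gt0 gen_g).
  have [i yi] := generator_exp y0.
  move/eqP: yy; rewrite yi -exprD (eq_prim_root_expr gen_g) => /eqP e.
  have : (i + i)%N = a %[mod 2] by rewrite -(modn_dvdm (i + i) even_order) e modn_dvdm.
  by rewrite !modn2 addnn odd_double; case: (odd a).
- exists (g ^+ a./2); rewrite -exprD addnn.
  by rewrite -[in X in _ == _ ^+ X](odd_double_half a) (negbTE a_even).
Qed.
End Generator.

Section EvenOrder.
Hypothesis even_order : (2 %| N)%N.

Lemma sqM (x y : F) : x != 0 -> y != 0 -> sq (x * y) = (sq x == sq y).
Proof.
have [g gen_g] := exists_generator.
move=> /(generator_exp gen_g)[a ->] /(generator_exp gen_g)[b ->].
rewrite -exprD !(sq_generator_exp gen_g even_order) oddD.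
by case: (odd a); case: (odd b).
Qed.

(* x and its inverse differ by the square x^2. *)
Lemma sqV (x : F) : sq x^-1 = sq x.
Proof.
have [->|x0] := eqVneq x 0; first by rewrite invr0.
have : sq (x * x^-1) by rewrite divff //; apply/existsP; exists 1; rewrite mulr1.
by rewrite sqM ?invr_eq0 // => /eqP.
Qed.

End EvenOrder.

Section OrderDiv4.
Hypothesis order_div4 : (4 %| N)%N.
Let even_order : (2 %| N)%N := dvdn_trans (isT : (2 %| 4)%N) order_div4.

Lemma sqN1 : sq (-1 : F).
Proof.
have [g gen_g] := exists_generator.
have N1_neq0 : -1 != 0 :> F by rewrite oppr_eq0 oner_eq0.
have [a ea] := generator_exp gen_g N1_neq0.
have : (N %| a * 2)%N by rewrite (prim_order_dvd gen_g) exprM -ea sqrrN expr1n.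
move=> /(dvdn_trans order_div4); rewrite ea (sq_generator_exp gen_g even_order).
rewrite -dvdn2; lia.
Qed.

Lemma sqN (x : F) : sq (- x) = sq x.
Proof.
have [->|x0] := eqVneq x 0; first by rewrite oppr0.
by rewrite -mulN1r sqM // ?oppr_eq0 ?oner_eq0 // sqN1.
Qed.

Lemma sq_subC (x y : F) : sq (x - y) = sq (y - x).
Proof. by rewrite -opprB sqN. Qed.
End OrderDiv4.
End QuadraticCharacter.

Section SignPreservingMaps.
Variables (T : finType) (sg : T -> T -> option bool) (f : T -> T).
Hypothesis f_inj : injective f.
Hypothesis f_sign : forall u v, sg (f u) (f v) = sg u v.

Lemma clique_seq_map k (X : k.-tuple T) :
  clique_seq sg X -> clique_seq sg (map_tuple f X).
Proof.
case=> uniqX adjX; split; first by rewrite map_inj_uniq.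
by move=> i j ij; rewrite !tnth_map f_sign adjX.
Qed.

Lemma card_successors_map k (X : k.-tuple T) (alpha : k.-tuple bool) :
  #|successors sg (map_tuple f X) alpha| = #|successors sg X alpha|.
Proof.
have -> : successors sg X alpha = f @^-1: successors sg (map_tuple f X) alpha.
  by apply/setP => u; rewrite !inE; apply: eq_forallb => i; rewrite tnth_map f_sign.
by rewrite card_preimset.
Qed.
End SignPreservingMaps.

Section TraceGraph.
Variable F : finFieldType.
Hypothesis order_div4 : (4 %| #|F|.-1)%N.
Let even_order : (2 %| #|F|.-1)%N := dvdn_trans (isT : (2 %| 4)%N) order_div4.
Local Notation vertex := (option F * bool)%type.

(* Key identity behind switching: 1/(x-a) - 1/(y-a) = -(x-y) / ((x-a)(y-a)). *)
Lemma sq_sub_inv (a x y : F) : x != a -> y != a -> x != y ->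
  sq ((x - a)^-1 - (y - a)^-1) = (sq (x - y) == (sq (x - a) == sq (y - a))).
Proof.
rewrite -(subr_eq0 x) -(subr_eq0 y) -(subr_eq0 x y) => xa ya xy.
have -> : (x - a)^-1 - (y - a)^-1 = - (x - y) * ((x - a)^-1 * (y - a)^-1).
  by field; rewrite xa ya.
by rewrite !sqM ?mulf_neq0 ?invr_neq0 ?oppr_eq0 // sqN // !sqV.
Qed.

Definition switch (a : F) (u : vertex) : vertex :=
  match u with
  | (None, i) => (Some 0, i)
  | (Some x, i) => if x == a then (None, i) else (Some (x - a)^-1, sq (x - a) == i)
  end.

Definition unswitch (a : F) (u : vertex) : vertex :=
  match u with
  | (None, i) => (Some a, i)
  | (Some w, j) => if w == 0 then (None, j) else (Some (w^-1 + a), sq w^-1 == j)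
  end.

Lemma switchK a : cancel (switch a) (unswitch a).
Proof.
case=> [[x|] i] //=; last by rewrite eqxx.
have [-> //|xa] := eqVneq x a.
rewrite /= invr_eq0 subr_eq0 (negbTE xa) invrK subrK.
by case: (sq _); case: i.
Qed.

Lemma switch_at a i : switch a (Some a, i) = (None, i).
Proof. by rewrite /= eqxx. Qed.

Lemma switch_sign a u v : TrSP (switch a u) (switch a v) = TrSP u v.
Proof.
case: u v => [[x|] i] [[y|] j] /=; rewrite ?eqxx //.
- have [ex | xa] := eqVneq x a; have [ey | ya] := eqVneq y a;
    rewrite ?ex ?ey /= ?eqxx //.
  + rewrite (eq_sym a y) (negbTE ya) (sq_subC order_div4 a); congr Some.
    by case: (sq _); case: i; case: j.
  + rewrite (negbTE xa); congr Some.
    by case: (sq _); case: i; case: j.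
  + rewrite (inj_eq invr_inj) (inj_eq (addIr _)).
    have [_ | xy] := eqVneq x y; first by [].
    rewrite sq_sub_inv //; congr Some.
    by case: (sq (x - y)); case: (sq (x - a)); case: (sq (y - a)); case: i; case: j.
- have [_ | xa] := eqVneq x a; rewrite /= ?eqxx //.
  rewrite invr_eq0 subr_eq0 (negbTE xa) subr0 sqV //; congr Some.
  by case: (sq _); case: i; case: j.
- have [_ | ya] := eqVneq y a; rewrite /= ?eqxx //.
  rewrite (eq_sym 0) invr_eq0 subr_eq0 (negbTE ya) sub0r sqN // sqV //; congr Some.
  by case: (sq _); case: i; case: j.
Qed.

(* The case of a clique starting at oo: P(m, l) for SP_q yields at least l
   successors in the layer fixed by the sign demanded towards oo. *)
Lemma successors_from_infinity m l :
  propP (@SP F) m l ->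
  forall (X : m.+1.-tuple vertex) (alpha : m.+1.-tuple bool),
  clique_seq (@TrSP F) X -> (tnth X ord0).1 = None ->
  (l <= #|successors (@TrSP F) X alpha|)%N.
Proof.
move=> propSP X alpha [_ adjX].
case E0: (tnth X ord0) => [o i0] /= o0; subst o.
pose Xt t := tnth X (lift ord0 t).
have finite t : exists y b, Xt t = (Some y, b).
  have := adjX ord0 (lift ord0 t) (neq_lift _ _).
  by rewrite E0 /Xt; case: (tnth X _) => [[y|] b] // _; exists y, b.
pose Y := [tuple odflt 0 (Xt t).1 | t < m].
have cliqueY : clique_seq (@SP F) Y.
  suff Y_adj t t' : t != t' -> tnth Y t != tnth Y t'.
    split=> [|t t' /Y_adj Ytt']; last by rewrite /SP (negbTE Ytt').
    apply/tuple_uniqP => t t' e; apply/eqP/negPn/negP => /Y_adj.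
    by rewrite e eqxx.
  move=> tt'; have := adjX (lift ord0 t) (lift ord0 t').
  rewrite (inj_eq lift_inj) tt' -/(Xt t) -/(Xt t') !tnth_mktuple => /(_ isT).
  have [y [b ->]] := finite t; have [y' [b' ->]] := finite t'.
  by apply: contra => /eqP /= ->; rewrite eqxx.
(* the layer j realises the sign alpha_0 towards oo_i0; beta corrects the
   remaining signs for the layer of each x_t *)
pose j := tnth alpha ord0 == i0.
pose beta := [tuple tnth alpha (lift ord0 t) == (j == (Xt t).2) | t < m].
apply: leq_trans (propSP Y beta cliqueY) _.
have layer_inj : injective (fun w : F => (Some w, j)) by move=> w w' [].
rewrite -(card_imset _ layer_inj); apply/subset_leq_card/subsetP => v.
case/imsetP=> w; rewrite inE => /forallP succ_w ->; rewrite inE; apply/forallP => i.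
case: (unliftP ord0 i) => [t ->|->]; last by rewrite E0 /= /j; case: (tnth _ _); case: (i0).
have := succ_w t; rewrite -/(Xt t) !tnth_mktuple.
have [y [b ->]] := finite t; rewrite /SP /=; case: (w == y) => //= /eqP [].
by rewrite (sq_subC order_div4) => ->; case: (j); case: b; case: (tnth _ _).
Qed.
End TraceGraph.

Local Close Scope ring_scope.

Theorem mainTheorem8 (F : finFieldType) (n k : nat) :
  #|F| %% 4 = 1 -> 2 <= n ->
  propP (@SP F) n.-1 k -> propP (@TrSP F) n k.
Proof.
move=> card_mod4 n_ge2 propSP.
have order_div4 : 4 %| #|F|.-1.
  by move: card_mod4; rewrite -[#|F|](prednK (ltnW (finNzRing_gt1 F))); lia.
case: n n_ge2 propSP => [|m] // _ propSP X alpha cliqueX.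
have from_infinity := successors_from_infinity order_div4 propSP alpha.
case E0: (tnth X ord0) => [[a|] i]; last by apply: from_infinity; rewrite ?E0.
have switch_inj := can_inj (switchK a).
have switch_sgn := switch_sign order_div4 a.
rewrite -(card_successors_map switch_inj switch_sgn).
apply: from_infinity; first exact: clique_seq_map switch_inj switch_sgn _ _ cliqueX.
by rewrite tnth_map E0 switch_at.
Qed.
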